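(* Every (fork, banner)-free graph $G$ satisfies $\chi(G)\le\omega(G)^2$.
   Context: All graphs are finite and simple; $\chi$ is chromatic number, $\omega$ clique number. The fork is obtained from $K_{1,3}$ by subdividing one edge once. The banner is a $4$-cycle with one pendant vertex attached. $G$ is $(H_1,H_2)$-free if it has no induced subgraph isomorphic to $H_1$ or $H_2$. *)

From mathcomp Require Import all_boot.
Set Implicit Arguments. Unset Strict Implicit. Unset Printing Implicit Defensive.

Definition simple_graph (T : finType) (e : rel T) : Prop :=
  symmetric e /\ irreflexive e.

Definition has_induced (T : finType) (e : rel T) (k : nat) (h : rel 'I_k) : Prop :=
  exists f : 'I_k -> T, injective f /\ forall x y, e (f x) (f y) = h x y.

Definition rel_of_edges (E : seq (nat * nat)) : rel 'I_5 :=
  fun x y => ((nat_of_ord x, nat_of_ord y) \in E) || ((nat_of_ord y, nat_of_ord x) \in E).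

(* fork: K_{1,3} with center 0, leaves 1,2,3; edge 0-3 extended by subdivision vertex i.e.
   edges 0-1, 0-2, 0-3, 3-4 *)
Definition fork : rel 'I_5 := rel_of_edges [:: (0,1); (0,2); (0,3); (3,4)].

(* banner: 4-cycle 0-1-2-3-0 with pendant vertex 4 attached to 0 *)
Definition banner : rel 'I_5 := rel_of_edges [:: (0,1); (1,2); (2,3); (3,0); (0,4)].

Definition free_of (T : finType) (e : rel T) (k : nat) (h : rel 'I_k) : Prop :=
  ~ has_induced e h.

Definition is_clique (T : finType) (e : rel T) (S : {set T}) : bool :=
  [forall x in S, forall y in S, (x != y) ==> e x y].

Definition clique_number (T : finType) (e : rel T) : nat :=
  \max_(S : {set T} | is_clique e S) #|S|.

Definition colorable (T : finType) (e : rel T) (k : nat) : bool :=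
  [exists f : {ffun T -> 'I_k}, [forall x, forall y, e x y ==> (f x != f y)]].

(* least k such that G is k-colorable (#|T| colours always suffice) *)
Definition chromatic_number (T : finType) (e : rel T) : nat :=
  \big[minn/#|T|]_(k < #|T|.+1 | colorable e k) k.

(* We prove the stronger, hereditary statement that every vertex set S of G
   induces a subgraph colourable with omega(S)^2 colours, by strong induction
   on |S|.  Pick any vertex u of S.
   - If the neighbourhood of u in S contains no independent triple, then by the
     Ramsey bound R(3, w) <= w(w-1)+1 it has fewer than omega(S)^2 vertices, so a
     colouring of S - u extends greedily to u.
   - Otherwise u is the centre of a claw.  Take a maximal independent set I of
     size >= 3 having a common neighbour, let Z be the common neighbours of I
     and O the vertices anticomplete to I.  Forbidding forks and banners forces
     either (O empty) Z to be complete to S - Z, a "join" whose two sides can be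
     coloured with disjoint palettes; or (O nonempty) a minimal nonempty part K
     of O closed under adjacency in O to have a neighbourhood P outside K which
     is a clique complete to K.  Then omega(K) + |P| <= omega(S), and a
     colouring of S - K extends to K using the omega(S)^2 - |P| colours
     unused on P.
   The file develops cliques and colourings, the Ramsey bound, the three
   extension lemmas, the structural consequences of fork- and banner-freeness,
   and finally the induction and the corollary. *)
From mathcomp Require Import all_boot zify.
Set Implicit Arguments. Unset Strict Implicit. Unset Printing Implicit Defensive.

(* Among the colours below n, at least n - |s| avoid the list s: so k colours
   avoiding s can be chosen injectively whenever k + |s| <= n. *)
Lemma avoid_colours (s : seq nat) k n : k + size s <= n ->
  exists g : nat -> nat, (forall i, i < k -> g i < n /\ g i \notin s) /\
    (forall i j, i < k -> j < k -> g i = g j -> i = j).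
Proof.
move=> hk; set F := [seq c <- iota 0 n | c \notin s].
have used : count (mem s) (iota 0 n) <= size s.
  rewrite -size_filter; apply: uniq_leq_size; first exact/filter_uniq/iota_uniq.
  by move=> c; rewrite mem_filter => /andP[].
have sizeF : k <= size F.
  have -> : size F = count (predC (mem s)) (iota 0 n) by rewrite size_filter.
  by have := count_predC (mem s) (iota 0 n); rewrite size_iota; lia.
have uniqF : uniq F by exact/filter_uniq/iota_uniq.
exists (nth 0 F); split => [i ik | i j ik jk].
  have := mem_nth 0 (leq_trans ik sizeF).
  by rewrite mem_filter mem_iota add0n => /andP[-> /andP[_ ->]].
by move/eqP; rewrite nth_uniq ?(leq_trans _ sizeF) // => /eqP.
Qed.

Lemma disjoint_setD (T : finType) (A S : {set T}) : [disjoint A & S :\: A].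
Proof. by rewrite disjoint_sym disjoints_subset setDE subsetIr. Qed.

Lemma proper_parts (T : finType) (A S : {set T}) : A \subset S -> A != set0 -> A != S ->
  A \proper S /\ S :\: A \proper S.
Proof.
move=> AS /set0Pn[x xA] AnS; rewrite properEneq AnS AS; split => //.
rewrite properE subsetDl; apply/subsetPn; exists x; first exact: (subsetP AS).
by rewrite inE xA.
Qed.

Section Graph.
Variables (T : finType) (e : rel T).
Hypotheses (esym : symmetric e) (eirr : irreflexive e).

Lemma neq_adj x y : e x y -> x != y.
Proof. by apply: contraTneq => ->; rewrite eirr. Qed.

Lemma neq_nbr x y z : e x z -> ~~ e y z -> x != y.
Proof. by move=> xz; apply: contraNneq => <-. Qed.

Lemma cliqueP (C : {set T}) :
  reflect (forall x y, x \in C -> y \in C -> x != y -> e x y) (is_clique e C).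
Proof.
apply: (iffP forall_inP) => [H x y xC yC xy | H x xC].
  by move/forall_inP: (H x xC) => /(_ y yC) /implyP; apply.
by apply/forall_inP => y yC; apply/implyP; apply: H.
Qed.

Lemma clique1 x : is_clique e [set x].
Proof. by apply/cliqueP => y z; rewrite !inE => /eqP-> /eqP->; rewrite eqxx. Qed.

Lemma cliqueU1 x (C : {set T}) :
  is_clique e C -> (forall y, y \in C -> e x y) -> is_clique e (x |: C).
Proof.
move=> /cliqueP hC hx; apply/cliqueP => y z; rewrite !inE.
case/orP=> [/eqP->|yC]; case/orP=> [/eqP->|zC]; rewrite ?eqxx //.
- by move=> _; apply: hx.
- by move=> _; rewrite esym; apply: hx.
- exact: hC.
Qed.

Definition indep (I : {set T}) : bool := [forall x in I, forall y in I, ~~ e x y].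

Lemma indepP (I : {set T}) :
  reflect (forall x y, x \in I -> y \in I -> ~~ e x y) (indep I).
Proof.
apply: (iffP forall_inP) => [H x y xI | H x xI]; first by move/forall_inP: (H x xI); apply.
by apply/forall_inP => y; apply: H.
Qed.

Lemma indep3 x y z : ~~ e x y -> ~~ e x z -> ~~ e y z -> indep [set x; y; z].
Proof.
move=> nxy nxz nyz; apply/indepP => p q; rewrite !inE.
by do 2![case/orP=> [/orP[]|]/eqP->]; rewrite ?eirr // esym.
Qed.

Definition omega_in (S : {set T}) : nat :=
  \max_(C : {set T} | (C \subset S) && is_clique e C) #|C|.

Lemma omega_in_ge (C S : {set T}) : C \subset S -> is_clique e C -> #|C| <= omega_in S.
Proof. by move=> CS hC; apply: (bigmax_sup C) => //; rewrite CS hC. Qed.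

Lemma omega_in_witness (S : {set T}) :
  exists C : {set T}, [/\ C \subset S, is_clique e C & omega_in S = #|C|].
Proof.
have P0 : (set0 \subset S) && is_clique e set0.
  by rewrite sub0set; apply/cliqueP => x y; rewrite inE.
case: (@arg_maxnP _ set0 (fun C => (C \subset S) && is_clique e C) (fun C => #|C|) P0).
move=> C /andP[CS hC] Cmax.
exists C; split => //; apply/eqP; rewrite eqn_leq omega_in_ge // andbT.
by apply/bigmax_leqP => D /Cmax.
Qed.

Lemma omega_in_mono (A B : {set T}) : A \subset B -> omega_in A <= omega_in B.
Proof.
move=> AB; apply/bigmax_leqP => C /andP[CA hC].
exact: omega_in_ge (subset_trans CA AB) hC.
Qed.

Lemma omega_in_pos (S : {set T}) x : x \in S -> 0 < omega_in S.
Proof. by move=> xS; rewrite -(cards1 x) omega_in_ge ?sub1set ?clique1. Qed.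

Lemma omega_in_join (S A B : {set T}) : A :|: B \subset S -> [disjoint A & B] ->
  (forall x y, x \in A -> y \in B -> e x y) -> omega_in A + omega_in B <= omega_in S.
Proof.
move=> ABS dAB hAB.
have [CA [CAs hCA ->]] := omega_in_witness A.
have [CB [CBs hCB ->]] := omega_in_witness B.
have := leq_card_setU CA CB; rewrite (disjointW CAs CBs dAB) => /leqifP /eqP <-.
apply: omega_in_ge; first exact: subset_trans (setUSS CAs CBs) ABS.
move/subsetP: CAs => CAs; move/subsetP: CBs => CBs.
apply/cliqueP => x y; rewrite !inE.
case/orP=> [xa|xb]; case/orP=> [ya|yb] xy.
- by move/cliqueP: hCA; apply.
- by apply: hAB; [apply: CAs | apply: CBs].
- by rewrite esym; apply: hAB; [apply: CAs | apply: CBs].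
- by move/cliqueP: hCB; apply.
Qed.

Lemma ramsey_bound t (A : {set T}) :
  (forall C : {set T}, C \subset A -> is_clique e C -> #|C| <= t) ->
  (forall I : {set T}, I \subset A -> indep I -> #|I| <= 2) ->
  #|A| <= t * t.+1.
Proof.
elim: t A => [|t IH] A hC hI; have [->|[x xA]] := set_0Vmem A; rewrite ?cards0 //.
  by have := hC [set x]; rewrite sub1set xA cards1 => /(_ isT (clique1 x)).
set A1 := [set y in A | e x y]; set A2 := [set y in A | (y != x) && ~~ e x y].
have A_cover : A \subset x |: (A1 :|: A2).
  by apply/subsetP => y yA; rewrite !inE yA /=; case: (y == x); case: (e x y).
have A2_clique : is_clique e A2.
  apply/cliqueP => y z; rewrite !inE => /and3P[yA yx nxy] /and3P[zA zx nxz] yz.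
  apply/negPn/negP => nyz; have := hI [set x; y; z].
  rewrite (indep3 nxy nxz nyz) leqNgt => /(_ _ isT) /negP; apply.
    by apply/subsetP => p; rewrite !inE => /orP[/orP[]|] /eqP->.
  apply/card_gt2P; exists x, y, z; rewrite !inE !eqxx ?orbT.
  by split; split; rewrite // eq_sym.
have A2_small : #|A2| <= t.+1.
  by apply: hC A2_clique; apply/subsetP => y; rewrite inE => /andP[].
have A1A : A1 \subset A by apply/subsetP => y; rewrite inE => /andP[].
have A1_small : #|A1| <= t * t.+1.
  apply: IH => [C CA1 hC1 | I IA1]; last exact: hI (subset_trans IA1 A1A).
  have sub_nbrs : {subset C <= A1} by apply/subsetP.
  have xC : x \notin C by apply/negP => /sub_nbrs; rewrite inE eirr andbF.
  have := hC (x |: C); rewrite cardsU1 xC add1n ltnS; apply.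
    by apply/subsetP => y; rewrite !inE => /orP[/eqP->//|/sub_nbrs]; rewrite inE => /andP[].
  by apply: cliqueU1 => // y /sub_nbrs; rewrite inE => /andP[].
have := subset_leq_card A_cover; rewrite cardsU1.
have := leq_card_setU A1 A2 => /leqifP; case: ifP => _ h; nia.
Qed.

Definition omega_sq_colourable (S : {set T}) : Prop :=
  exists f : T -> nat, (forall x, x \in S -> f x < omega_in S ^ 2) /\
    (forall x y, x \in S -> y \in S -> e x y -> f x != f y).

Definition nbrs_in (S : {set T}) u : {set T} := [set y in S | e u y].

(* Greedy step: if u has no independent triple among its neighbours, these
   number at most (w - 1)w < w^2 (w = omega(S)), so a colour is left for u. *)
Lemma colour_add_vertex (S : {set T}) u : u \in S ->
  (forall I : {set T}, I \subset nbrs_in S u -> indep I -> #|I| <= 2) ->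
  omega_sq_colourable (S :\ u) -> omega_sq_colourable S.
Proof.
move=> uS no_claw [f [f_lt f_ok]].
have sub_nbrs (C : {set T}) :
    C \subset nbrs_in S u -> {subset C <= S} /\ forall y, y \in C -> e u y.
  by move/subsetP=> CN; split=> y /CN; rewrite inE => /andP[].
have := omega_in_pos uS; case def_w: (omega_in S) => [//|t] _.
have N_small : #|nbrs_in S u| <= t * t.+1.
  apply: ramsey_bound no_claw => C /sub_nbrs[CS uC] hC.
  have uC' : u \notin C by apply/negP => /uC; rewrite eirr.
  have := @omega_in_ge (u |: C) S; rewrite cardsU1 uC' def_w add1n ltnS; apply.
    by apply/subsetP => y; rewrite !inE => /orP[/eqP->|/CS].
  exact: cliqueU1.
set used := [seq f y | y <- enum (nbrs_in S u)].
have [|g [g_ok _]] := @avoid_colours used 1 (t.+1 ^ 2).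
  by rewrite size_map -cardE -mulnn; nia.
have [c_lt c_new] := g_ok 0 isT.
have used_nbr y : y \in S -> e u y -> f y \in used.
  by move=> yS uy; apply: map_f; rewrite mem_enum inE yS uy.
exists (fun x => if x == u then g 0 else f x); split => [x xS | x y xS yS xy].
  case: eqP => [_|/eqP xu]; first by rewrite def_w.
  apply: leq_trans (f_lt x _) _; first by rewrite !inE xu.
  by rewrite leq_exp2r // omega_in_mono // subsetDl.
case: (eqVneq x u) => [xu|xu]; case: (eqVneq y u) => [yu|yu].
- by move: xy; rewrite xu yu eirr.
- by apply: contraNneq c_new => ->; apply: used_nbr; rewrite -?xu.
- by apply: contraNneq c_new => <-; apply: used_nbr; rewrite // esym -yu.
- by apply: f_ok; rewrite // !inE ?xu ?yu.
Qed.

(* Join step: when A is complete to S - A, cliques of the two sides combine, so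
   omega(A) + omega(S - A) <= omega(S) and disjoint palettes fit in omega(S)^2. *)
Lemma colour_join (S A : {set T}) : A \subset S ->
  (forall x y, x \in A -> y \in S :\: A -> e x y) ->
  omega_sq_colourable A -> omega_sq_colourable (S :\: A) -> omega_sq_colourable S.
Proof.
move=> AS hA [f1 [f1_lt f1_ok]] [f2 [f2_lt f2_ok]].
have hom : omega_in A + omega_in (S :\: A) <= omega_in S.
  by apply: omega_in_join hA; rewrite ?disjoint_setD // subUset AS subsetDl.
have sq : omega_in A ^ 2 + omega_in (S :\: A) ^ 2 <= omega_in S ^ 2.
  by have := leq_mul hom hom; rewrite -!mulnn; nia.
exists (fun x => if x \in A then f1 x else omega_in A ^ 2 + f2 x).
split => [x xS | x y xS yS xy].
  case: ifP => xA; first exact: leq_trans (f1_lt x xA) (leq_trans (leq_addr _ _) sq).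
  by apply: leq_trans sq; rewrite ltn_add2l f2_lt // inE xA.
case: ifP => xA; case: ifP => yA.
- exact: f1_ok.
- by apply: contraTneq (f1_lt x xA) => ->; rewrite -leqNgt leq_addr.
- by apply: contraTneq (f1_lt y yA) => <-; rewrite -leqNgt leq_addr.
- by rewrite eqn_add2l f2_ok // inE ?xA ?yA.
Qed.

Definition boundary (S K : {set T}) : {set T} := [set z in S :\: K | [exists w in K, e z w]].

(* Boundary step: when the boundary P of K is a clique complete to K, then
   omega(K) + |P| <= omega(S); colour S - K, and recolour K injectively with
   the colours not used on P. *)
Lemma colour_boundary (S K : {set T}) : K \subset S ->
  is_clique e (boundary S K) -> (forall x y, x \in boundary S K -> y \in K -> e x y) ->
  omega_sq_colourable K -> omega_sq_colourable (S :\: K) -> omega_sq_colourable S.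
Proof.
move=> KS P_clique PK [f2 [f2_lt f2_ok]] [f1 [f1_lt f1_ok]].
set P := boundary S K.
have PS : P \subset S :\: K by apply/subsetP => z; rewrite inE => /andP[].
have hom : omega_in K + #|P| <= omega_in S.
  apply: leq_trans (leq_add (leqnn _) (omega_in_ge (subxx P) P_clique)) _.
  apply: omega_in_join => [|| x y xK yP]; last by rewrite esym PK.
  - by rewrite subUset KS (subset_trans PS) ?subsetDl.
  - exact: disjointWr PS (disjoint_setD K S).
set used := [seq f1 x | x <- enum P].
have [|g [g_ok g_inj]] := @avoid_colours used (omega_in K ^ 2) (omega_in S ^ 2).
  by rewrite size_map -cardE; have := leq_mul hom hom; rewrite -!mulnn; nia.
have used_P x y : x \in K -> y \in S -> y \notin K -> e x y -> f1 y \in used.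
  move=> xK yS yK xy; apply: map_f; rewrite mem_enum !inE yK yS.
  by apply/exists_inP; exists x; rewrite // esym.
exists (fun x => if x \in K then g (f2 x) else f1 x); split => [x xS | x y xS yS xy].
  case: ifP => xK; first by have [] := g_ok _ (f2_lt x xK).
  apply: leq_trans (f1_lt x _) _; first by rewrite inE xK.
  by rewrite leq_exp2r // omega_in_mono // subsetDl.
case: ifP => xK; case: ifP => yK.
- by apply: contraNneq (f2_ok x y xK yK xy) => /g_inj-> //; apply: f2_lt.
- have [_ fresh] := g_ok _ (f2_lt x xK).
  by apply: contraNneq fresh => ->; apply: used_P xy; rewrite ?yK.
- have [_ fresh] := g_ok _ (f2_lt y yK).
  by apply: contraNneq fresh => <-; apply: (used_P y x); rewrite ?xK // esym.
- by apply: f1_ok; rewrite // inE ?xK ?yK.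
Qed.

Lemma realise5 (h : rel 'I_5) (s : seq T) (a : T) :
  symmetric h -> irreflexive h -> size s = 5 -> uniq s ->
  (forall i j : 'I_5, i < j -> e (nth a s i) (nth a s j) = h i j) -> has_induced e h.
Proof.
move=> hsym hirr s5 us hlt; exists (fun i => nth a s i); split.
  by move=> i j /eqP; rewrite nth_uniq ?s5 // => /eqP /val_inj.
move=> i j; case: (ltngtP i j) => [ij | ji | /val_inj ->]; first exact: hlt.
  by rewrite esym hsym hlt.
by rewrite eirr hirr.
Qed.

Lemma rel_of_edges_sym (E : seq (nat * nat)) : symmetric (rel_of_edges E).
Proof. by move=> x y; rewrite /rel_of_edges orbC. Qed.

(* Two vertices of a prescribed pattern are distinct when they are adjacent or
   when some third vertex sees one of them but not the other. *)
Ltac separate_pair :=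
  match goal with
  | H : is_true (?u != ?v) |- is_true (?u != ?v) => exact: H
  | H : is_true (e ?u ?v) |- is_true (?u != ?v) => exact: neq_adj H
  | H : is_true (e ?u ?z), H' : is_true (~~ e ?v ?z) |- is_true (?u != ?v) =>
      exact: neq_nbr H H'
  | H : is_true (e ?u ?z), H' : is_true (~~ e ?z ?v) |- is_true (?u != ?v) =>
      by apply: neq_nbr H _; rewrite esym
  | H : is_true (e ?z ?u), H' : is_true (~~ e ?v ?z) |- is_true (?u != ?v) =>
      by apply: neq_nbr _ H'; rewrite esym
  | H : is_true (e ?z ?u), H' : is_true (~~ e ?z ?v) |- is_true (?u != ?v) =>
      by apply: (neq_nbr (z := z)); rewrite esym
  end.

Ltac distinct_vertices :=
  rewrite /= !inE !negb_or -!andbA; repeat (apply/andP; split);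
  first [ done | separate_pair | rewrite eq_sym; separate_pair ].

(* The ten pairs i < j of a concrete pattern, checked against the hypotheses
   (each given in one of its two orientations). *)
Ltac check_pattern :=
  move=> [[|[|[|[|[|?]]]]] ?] [[|[|[|[|[|?]]]]] ?] //= _;
  rewrite /fork /banner /rel_of_edges /=;
  first [ done | exact/negbTE | rewrite esym; first [ done | exact/negbTE ] ].

Section ForkBannerFree.
Hypotheses (fork_free : free_of e fork) (banner_free : free_of e banner).

(* No induced fork: centre a, leaves b, c, d, and x pendant at d. *)
Lemma no_fork a b c d x : b != c -> e a b -> e a c -> e a d -> e d x ->
  ~~ e b c -> ~~ e b d -> ~~ e c d -> ~~ e a x -> ~~ e b x -> ~~ e c x -> False.
Proof.
move=> bc ab ac ad dx nbc nbd ncd nax nbx ncx.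
apply: fork_free; apply: (@realise5 _ [:: a; b; c; d; x] a) => //.
- exact: rel_of_edges_sym.
- by case=> [[|[|[|[|[|?]]]]] ?].
- distinct_vertices.
- check_pattern.
Qed.

(* No induced banner: 4-cycle a b c d, and x pendant at a. *)
Lemma no_banner a b c d x : b != d -> e a b -> e b c -> e c d -> e d a -> e a x ->
  ~~ e a c -> ~~ e b d -> ~~ e x b -> ~~ e x c -> ~~ e x d -> False.
Proof.
move=> bd ab bc cd da ax nac nbd nxb nxc nxd.
apply: banner_free; apply: (@realise5 _ [:: a; b; c; d; x] a) => //.
- exact: rel_of_edges_sym.
- by case=> [[|[|[|[|[|?]]]]] ?].
- distinct_vertices.
- check_pattern.
Qed.

Ltac side_fact :=
  first [ done | by rewrite eq_sym | by rewrite esym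
        | match goal with H : _ |- _ => first [ by apply: H | by rewrite esym; apply: H ] end ].

Definition common_nbrs (S I : {set T}) : {set T} := [set z in S | [forall x in I, e z x]].
Definition anticomplete (S I : {set T}) : {set T} :=
  [set o in S :\: I | [forall x in I, ~~ e o x]].

(* K is a nonempty union of connected components of the subgraph induced on O. *)
Definition closed_part (O K : {set T}) : bool :=
  [&& K \subset O, K != set0 & [forall x in K, forall y in O, e x y ==> (y \in K)]].

Section MaximalIndependentSet.
Variables (S I : {set T}) (z0 : T).
Local Notation Z := (common_nbrs S I).
Local Notation O := (anticomplete S I).
Hypotheses (IS : I \subset S) (I_big : 2 < #|I|).
Hypothesis I_indep : forall x y, x \in I -> y \in I -> ~~ e x y.
Hypothesis z0Z : z0 \in Z.
(* Maximality of I: a vertex of O seen by a common neighbour of I would extend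
   I to a larger independent set with a common neighbour. *)
Hypothesis I_max : forall z o, z \in Z -> o \in O -> ~~ e z o.

Lemma mem_Z z : z \in Z -> z \in S /\ forall x, x \in I -> e z x.
Proof. by rewrite inE => /andP[zS /forall_inP]. Qed.

Lemma mem_O o : o \in O -> [/\ o \in S, o \notin I & forall x, x \in I -> ~~ e o x].
Proof. by rewrite !inE => /andP[/andP[oI oS] /forall_inP]. Qed.

Lemma third_vertex x y : exists2 t, t \in I & (t != x) && (t != y).
Proof.
have : 0 < #|I :\: [set x; y]|.
  rewrite cardsD subn_gt0; apply: leq_ltn_trans (subset_leq_card (subsetIr I _)) _.
  by rewrite cards2; apply: leq_trans I_big; case: (x != y).
rewrite card_gt0 => /set0Pn[t]; rewrite !inE negb_or => /andP[/andP[tx ty] tI].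
by exists t; rewrite ?tx ?ty.
Qed.

Lemma I_notin_Z t : t \in I -> t \notin Z.
Proof. by move=> tI; apply/negP => /mem_Z[_ /(_ t tI)]; rewrite eirr. Qed.

(* A non-neighbour of a common neighbour of I seeing one vertex of I sees all
   of I: otherwise a fork or a banner appears. *)
Lemma Z_absorbs z w x : z \in Z -> w \in S -> w \notin I -> ~~ e z w ->
  x \in I -> e w x -> w \in Z.
Proof.
move=> zZ wS wI nzw xI wx; have [zS zI] := mem_Z zZ.
rewrite inE wS; apply/forall_inP => y yI; case: (eqVneq y x) => [->//|yx].
have [t tI /andP[tx ty]] := third_vertex x y.
apply/negPn/negP => nwy; case: (boolP (e w t)) => wt.
- by apply: (no_banner (a := z) (b := x) (c := w) (d := t) (x := y)); side_fact.
- by apply: (no_fork (a := z) (b := y) (c := t) (d := x) (x := w)); side_fact.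
Qed.

Lemma Z_proper : Z != set0 /\ Z != S.
Proof.
split; first by apply/set0Pn; exists z0.
have [t tI _] := third_vertex z0 z0.
by apply: contraNneq (I_notin_Z tI) => ->; apply: (subsetP IS).
Qed.

Lemma Z_complete : O = set0 -> forall x y, x \in Z -> y \in S :\: Z -> e x y.
Proof.
move=> O0 x y xZ; rewrite inE => /andP[yZ yS]; have [xS xI] := mem_Z xZ.
case: (boolP (y \in I)) => [/xI //|yI].
have : y \notin O by rewrite O0 inE.
rewrite !inE yI yS /= => /forall_inPn[t tI]; rewrite negbK => yt.
apply/negPn/negP => nxy.
by have := Z_absorbs xZ yS yI nxy tI yt; rewrite (negbTE yZ).
Qed.

Section MinimalPart.
Variable K : {set T}.
Local Notation P := (boundary S K).
Hypothesis K_part : closed_part O K.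
Hypothesis K_min : forall K', closed_part O K' -> #|K| <= #|K'|.

Lemma K_sub_O x : x \in K -> x \in O.
Proof. by case/and3P: K_part => /subsetP KO _ _; apply: KO. Qed.

Lemma K_neq0 : K != set0.
Proof. by case/and3P: K_part. Qed.

Lemma K_closed x y : x \in K -> y \in O -> e x y -> y \in K.
Proof.
case/and3P: K_part => _ _ /forall_inP cl xK yO.
by move/forall_inP: (cl x xK) => /(_ y yO) /implyP.
Qed.

Lemma K_proper : K != S.
Proof.
have [t tI _] := third_vertex z0 z0.
apply/negP => /eqP KS; have := subsetP IS t tI; rewrite -KS => /K_sub_O /mem_O[_].
by rewrite tI.
Qed.

Lemma boundary_facts x : x \in P ->
  [/\ x \in S, x \notin I, e z0 x, exists2 o, o \in K & e x o
    & exists2 t, t \in I & ~~ e x t].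
Proof.
rewrite !inE => /andP[/andP[xK xS] /exists_inP[o oK xo]].
have [oS oI oA] := mem_O (K_sub_O oK).
have xI : x \notin I by apply/negP => /oA; rewrite esym xo.
have xO : x \notin O by apply: contraNN xK => /(K_closed oK); apply; rewrite esym.
have [t tI xt] : exists2 t, t \in I & e x t.
  by move: xO; rewrite !inE xI xS => /forall_inPn[t tI]; rewrite negbK; exists t.
have xZ : x \notin Z by apply/negP => /I_max/(_ (K_sub_O oK)); rewrite xo.
split => //.
- by apply/negPn/negP => nzx; have := Z_absorbs z0Z xS xI nzx tI xt; rewrite (negbTE xZ).
- by exists o.
- by move: xZ; rewrite inE xS => /forall_inPn[t' t'I nxt']; exists t'.
Qed.

(* A boundary vertex misses at most one vertex of I (else a fork centred at z0). *)
Lemma boundary_misses_one x y1 y2 : x \in P -> y1 \in I -> y2 \in I -> y1 != y2 ->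
  e x y1 || e x y2.
Proof.
move=> xP y1I y2I y12; have [xS xI z0x [o oK xo] _] := boundary_facts xP.
have [oS oI oA] := mem_O (K_sub_O oK); have z0o := I_max z0Z (K_sub_O oK).
have [_ z0I] := mem_Z z0Z.
apply/negPn/negP; rewrite negb_or => /andP[nx1 nx2].
by apply: (no_fork (a := z0) (b := y1) (c := y2) (d := x) (x := o)); side_fact.
Qed.

Lemma boundary_sees_rest x b t : x \in P -> b \in I -> t \in I -> ~~ e x b -> t != b ->
  e x t.
Proof.
move=> xP bI tI nxb tb.
by have := boundary_misses_one xP bI tI; rewrite eq_sym tb (negbTE nxb); apply.
Qed.

Lemma boundary_sees_two x : x \in P ->
  exists t1 t2, [/\ t1 \in I, t2 \in I, t1 != t2, e x t1 & e x t2].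
Proof.
move=> xP; have [_ _ _ _ [b bI nxb]] := boundary_facts xP.
have [t1 t1I /andP[t1b _]] := third_vertex b b.
have [t2 t2I /andP[t2b t2t1]] := third_vertex b t1.
by exists t1, t2; rewrite eq_sym t2t1 !(boundary_sees_rest xP bI _ nxb).
Qed.

(* The boundary is complete to K: its neighbours in K form a closed part of O
   (else a fork centred at x), hence all of K by minimality. *)
Lemma boundary_complete x y : x \in P -> y \in K -> e x y.
Proof.
move=> xP yK; have [xS xI z0x [o oK xo] _] := boundary_facts xP.
have [t1 [t2 [t1I t2I t12 xt1 xt2]]] := boundary_sees_two xP.
set K' := [set v in K | e x v].
have K'_part : closed_part O K'.
  apply/and3P; split.
  - by apply/subsetP => v; rewrite inE => /andP[/K_sub_O].
  - by apply/set0Pn; exists o; rewrite inE oK.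
  apply/forall_inP => v; rewrite inE => /andP[vK xv].
  apply/forall_inP => v' v'O; apply/implyP => vv'.
  rewrite inE (K_closed vK v'O vv') /=.
  have [_ _ vA] := mem_O (K_sub_O vK); have [_ _ v'A] := mem_O v'O.
  apply/negPn/negP => nxv'.
  by apply: (no_fork (a := x) (b := t1) (c := t2) (d := v) (x := v')); side_fact.
have : K' == K by rewrite eqEcard K_min // andbT; apply/subsetP => v; rewrite inE => /andP[].
by move/eqP => eK; move: yK; rewrite -eK inE => /andP[].
Qed.

(* The boundary is a clique: two nonadjacent boundary vertices with a common
   neighbour o in K yield a banner. *)
Lemma boundary_clique : is_clique e P.
Proof.
apply/cliqueP => x1 x2 x1P x2P x12; apply/negPn/negP => n12.
have [o oK] := set0Pn _ K_neq0; have [oS oI oA] := mem_O (K_sub_O oK).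
have z0o := I_max z0Z (K_sub_O oK); have [_ z0I] := mem_Z z0Z.
have x1o := boundary_complete x1P oK; have x2o := boundary_complete x2P oK.
have [_ _ z0x1 _ [b1 b1I nx1b1]] := boundary_facts x1P.
have [_ _ z0x2 _ [b2 b2I nx2b2]] := boundary_facts x2P.
case: (eqVneq b1 b2) => [eb|b12].
  subst b2.
  by apply: (no_banner (a := z0) (b := x1) (c := o) (d := x2) (x := b1)); side_fact.
have x2b1 := boundary_sees_rest x2P b2I b1I nx2b2 b12.
have [t tI /andP[tb1 tb2]] := third_vertex b1 b2.
have to : t != o by apply: contraNneq oI => <-.
have x1t := boundary_sees_rest x1P b1I tI nx1b1 tb1.
have x2t := boundary_sees_rest x2P b2I tI nx2b2 tb2.
by apply: (no_banner (a := x2) (b := t) (c := x1) (d := o) (x := b1)); side_fact.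
Qed.

End MinimalPart.

(* Either Z is complete to S - Z (join), or a minimal closed part K of O has a
   clique boundary complete to K; in both cases S is colourable from its
   proper parts. *)
Lemma colour_from_maximal_indep :
  (forall A : {set T}, A \proper S -> omega_sq_colourable A) -> omega_sq_colourable S.
Proof.
move=> IH.
have parts (A : {set T}) : A \subset S -> A != set0 -> A != S ->
    omega_sq_colourable A /\ omega_sq_colourable (S :\: A).
  by move=> AS A0 AnS; have [pA pD] := proper_parts AS A0 AnS; split; apply: IH.
case: (eqVneq O set0) => [O0 | On0].
  have ZS : Z \subset S by apply/subsetP => z /mem_Z[].
  have [Z0 ZnS] := Z_proper.
  have [cZ cR] := parts Z ZS Z0 ZnS.
  exact: colour_join ZS (Z_complete O0) cZ cR.
have O_part : closed_part O O.
  rewrite /closed_part subxx On0; apply/forall_inP => x _.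
  by apply/forall_inP => y yO; apply/implyP.
case: (@arg_minnP _ _ (closed_part O) (fun K => #|K|) O_part) => K K_part K_min.
have KS : K \subset S by apply/subsetP => x /(K_sub_O K_part) /mem_O[].
have [cK cR] := parts K KS (K_neq0 K_part) (K_proper K_part).
exact: colour_boundary KS (boundary_clique K_part K_min) (boundary_complete K_part K_min)
  cK cR.
Qed.
End MaximalIndependentSet.

(* A claw centred at u grows into a largest independent set I of S with at
   least three vertices and a common neighbour in S; maximality of |I| is
   exactly the hypothesis I_max of colour_from_maximal_indep. *)
Lemma colour_claw_centre (S I0 : {set T}) u : u \in S -> I0 \subset nbrs_in S u ->
  indep I0 -> 2 < #|I0| ->
  (forall A : {set T}, A \proper S -> omega_sq_colourable A) -> omega_sq_colourable S.
Proof.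
move=> uS /subsetP I0N I0_indep I0_big IH.
pose big_indep (I : {set T}) :=
  [&& I \subset S, indep I, 2 < #|I| & common_nbrs S I != set0].
have I0_ok : big_indep I0.
  rewrite /big_indep I0_indep I0_big /=; apply/andP; split.
    by apply/subsetP => x /I0N; rewrite inE => /andP[].
  apply/set0Pn; exists u; rewrite inE uS.
  by apply/forall_inP => x /I0N; rewrite inE => /andP[].
case: (@arg_maxnP _ _ big_indep (fun I => #|I|) I0_ok) => I.
case/and4P=> IS /indepP I_indep I_big /set0Pn[z0 z0Z] I_largest.
apply: (colour_from_maximal_indep IS I_big I_indep z0Z) IH => z o zZ oO.
apply/negP => zo; have [oS oI oA] := mem_O oO; have [zS zI] := mem_Z zZ.
have : big_indep (o |: I).
  apply/and4P; split.
  - by rewrite subUset sub1set oS IS.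
  - apply/indepP => x y; rewrite !inE => /orP[/eqP->|xI] /orP[/eqP->|yI];
      rewrite ?eirr //; [exact: oA | rewrite esym; exact: oA | exact: I_indep].
  - by rewrite cardsU1 oI ltnW.
  - apply/set0Pn; exists z; rewrite inE zS; apply/forall_inP => x.
    by rewrite !inE => /orP[/eqP->|/zI].
by move/I_largest; rewrite cardsU1 oI; lia.
Qed.

Lemma omega_sq_colourable_all (S : {set T}) : omega_sq_colourable S.
Proof.
have [n] := ubnP #|S|; elim: n S => // n IH S /ltnSE S_small.
have IH' (A : {set T}) : A \proper S -> omega_sq_colourable A.
  by move/proper_card => AS; apply: IH; apply: leq_trans AS S_small.
have [->|[u uS]] := set_0Vmem S; first by exists (fun _ => 0); split => x; rewrite inE.
case: (boolP [exists I : {set T}, [&& I \subset nbrs_in S u, indep I & 2 < #|I|]]).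
  case/existsP => I0 /and3P[I0N I0_indep I0_big].
  exact: colour_claw_centre uS I0N I0_indep I0_big IH'.
move/existsPn => no_claw; apply: colour_add_vertex uS _ (IH' _ (properD1 uS)) => I IN I_indep.
by have := no_claw I; rewrite IN I_indep /= -leqNgt.
Qed.

End ForkBannerFree.
End Graph.

Lemma bigmin_le (I : eqType) (r : seq I) (P : pred I) (F : I -> nat) idx j :
  j \in r -> P j -> \big[minn/idx]_(i <- r | P i) F i <= F j.
Proof.
elim: r => // x r IH; rewrite inE big_cons => /orP[/eqP<- -> | jr Pj].
  exact: geq_minl.
by case: (P x); [apply: leq_trans (geq_minr _ _) _ |]; apply: IH.
Qed.

Lemma chromatic_number_le (T : finType) (e : rel T) k :
  colorable e k -> chromatic_number e <= k.
Proof.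
move=> ek; rewrite /chromatic_number; case: (ltnP #|T| k) => [Tk | kT].
  apply/ltnW/(leq_ltn_trans _ Tk)/(big_ind (fun m => m <= #|T|)) => //.
  - by move=> x y xT _; rewrite geq_min xT.
  - by move=> i _; rewrite -ltnS.
by apply: (@bigmin_le _ _ _ _ _ (Ordinal (kT : k < #|T|.+1))); rewrite ?mem_index_enum.
Qed.

Lemma colorable_of_colouring (T : finType) (e : rel T) (f : T -> nat) k :
  (forall x, f x < k) -> (forall x y, e x y -> f x != f y) -> colorable e k.
Proof.
move=> f_lt f_ok; apply/existsP; exists [ffun x => Ordinal (f_lt x)].
apply/forallP => x; apply/forallP => y; apply/implyP => xy; rewrite !ffunE.
by apply: contra (f_ok x y xy) => /eqP[->].
Qed.

Lemma omega_in_setT (T : finType) (e : rel T) : omega_in e [set: T] = clique_number e.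
Proof. by apply: eq_bigl => C; rewrite subsetT. Qed.

Theorem corollary3p15 (T : finType) (e : rel T) :
  simple_graph e -> free_of e fork -> free_of e banner ->
  chromatic_number e <= clique_number e ^ 2.
Proof.
move=> [esym eirr] fork_free banner_free.
have [f [f_lt f_ok]] := omega_sq_colourable_all esym eirr fork_free banner_free [set: T].
rewrite -omega_in_setT; apply: chromatic_number_le.
by apply: (colorable_of_colouring (f := f)) => [x | x y]; [apply: f_lt | apply: f_ok].
Qed.
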